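(* Let $m,n>0$, $h\ge0$ and $\theta>0$, and let $g(u)=\bar\Psi_{m+h,n}\big(\theta\,\bar\Psi_{m,n}^{-1}(u)\big)$ for $u\in(0,1)$. If $\theta\le1$, then $g$ is concave on $(0,1)$; if $\theta>1$ and $h=0$, then $g$ is convex on $(0,1)$.
   Context: $\Psi_{k,n}$ denotes the CDF of $U/W$, where $U\sim\chi^2_k$ and $W\sim\chi^2_n$ are independent (equivalently, of $(k/n)F_{k,n}$); $\bar\Psi_{k,n}=1-\Psi_{k,n}$ and $\bar\Psi_{k,n}^{-1}:(0,1)\to(0,\infty)$ is the inverse of $\bar\Psi_{k,n}$. *)

From Stdlib Require Import Reals.
From Coquelicot Require Import Coquelicot.
Open Scope R_scope.

(* Unnormalised density of U/W, U ~ chi^2_k, W ~ chi^2_n independent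
   (beta-prime(k/2, n/2) law): t^(k/2-1) (1+t)^(-(k+n)/2) for t > 0. *)
Definition ratio_kernel (k n t : R) : R :=
  Rpower t (k / 2 - 1) * Rpower (1 + t) (- ((k + n) / 2)).

(* Normalising constant  int_0^oo kernel  (= B(k/2, n/2)). *)
Definition ratio_norm (k n : R) : R :=
  RInt_gen (ratio_kernel k n) (at_right 0) (Rbar_locally p_infty).

Definition Psi (k n x : R) : R :=
  RInt_gen (ratio_kernel k n) (at_right 0) (at_point x) / ratio_norm k n.

Definition Psibar (k n x : R) : R := 1 - Psi k n x.

Definition concave_on (a b : R) (f : R -> R) : Prop :=
  forall x y t, a < x < b -> a < y < b -> 0 <= t <= 1 ->
    t * f x + (1 - t) * f y <= f (t * x + (1 - t) * y).

Definition convex_on (a b : R) (f : R -> R) : Prop :=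
  forall x y t, a < x < b -> a < y < b -> 0 <= t <= 1 ->
    f (t * x + (1 - t) * y) <= t * f x + (1 - t) * f y.

From Stdlib Require Import Reals Lra Psatz.
From Coquelicot Require Import Coquelicot.
Open Scope R_scope.

(* Let psi_k be the density of Psi_{k,n} and X the inverse of Psibar_{m,n}.  For u, v in (0,1),
   u - v = int_{X u}^{X v} psi_m  and  g u - g v = int_{X u}^{X v} theta psi_{m+h}(theta t) dt,
   and X is decreasing; so comparing both integrals on [X u2, X u1] and [X u3, X u2] with the
   likelihood ratio  theta psi_{m+h}(theta t) / psi_m(t)  at X u2 shows that g is concave when
   this ratio is nondecreasing, convex when it is nonincreasing.  Up to a positive constant the
   ratio is  (t / (1 + theta t))^(h/2) ((1 + t) / (1 + theta t))^((m+n)/2):  both factors are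
   nondecreasing for theta <= 1, and for h = 0 only the second one, nonincreasing for
   theta >= 1, remains.  The improper integrals defining Psi are computed from the limits at 0
   and +oo of the primitive int_1^x of the kernel, which exist by comparison with powers of t. *)

Lemma ball_Rabs (x e y : R) : ball x e y <-> Rabs (y - x) < e.
Proof. reflexivity. Qed.

Lemma at_right_0_pos : at_right 0 (fun x => 0 < x).
Proof. exact (filter_forall _ (fun _ H => H)). Qed.

Lemma segment_pos a b x : 0 < a -> 0 < b -> Rmin a b <= x <= Rmax a b -> 0 < x.
Proof. intros Ha Hb Hx. assert (0 < Rmin a b) by (apply Rmin_pos; assumption). lra. Qed.

Lemma continuous_Rpower_l c t : 0 < t -> continuous (fun x => Rpower x c) t.
Proof.
  intros Ht. apply (@ex_derive_continuous R_AbsRing R_NormedModule).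
  exists (c * Rpower t (c - 1)). apply is_derive_Reals, derivable_pt_lim_power; exact Ht.
Qed.

Lemma RInt_Rpower p u v : p <> 0 -> 0 < u -> 0 < v ->
  RInt (fun t => Rpower t (p - 1)) u v = (Rpower v p - Rpower u p) / p.
Proof.
  intros Hp Hu Hv. apply is_RInt_unique.
  replace ((Rpower v p - Rpower u p) / p) with (minus (Rpower v p / p) (Rpower u p / p))
    by (unfold minus, plus, opp; simpl; field; exact Hp).
  assert (Hpos : forall x, Rmin u v <= x <= Rmax u v -> 0 < x)
    by exact (fun x => segment_pos u v x Hu Hv).
  apply (is_RInt_derive (fun t => Rpower t p / p)); intros x Hx.
  - apply is_derive_Reals.
    replace (Rpower x (p - 1)) with (p * Rpower x (p - 1) / p) by (field; exact Hp).
    apply (derivable_pt_lim_div_scal (fun t => Rpower t p)), derivable_pt_lim_power, Hpos, Hx.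
  - apply continuous_Rpower_l, Hpos, Hx.
Qed.

Lemma filterlim_Rpower_0 p : 0 < p -> filterlim (fun x => Rpower x p) (at_right 0) (locally 0).
Proof.
  intros Hp. unfold Rpower.
  apply (filterlim_comp _ _ _ (fun x => p * ln x) exp _ (Rbar_locally m_infty));
    [|exact is_lim_exp_m].
  apply (filterlim_comp _ _ _ ln (Rmult p) _ (Rbar_locally m_infty)); [exact is_lim_ln_0|].
  rewrite <- (is_Rbar_mult_unique p m_infty m_infty) at 2.
  - apply filterlim_Rbar_mult_l.
  - apply is_Rbar_mult_sym, is_Rbar_mult_m_infty_pos; simpl; lra.
Qed.

Lemma filterlim_Rpower_p_infty q : 0 < q ->
  filterlim (fun x => Rpower x (- q)) (Rbar_locally p_infty) (locally 0).
Proof.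
  intros Hq. unfold Rpower.
  apply (filterlim_comp _ _ _ (fun x => - q * ln x) exp _ (Rbar_locally m_infty));
    [|exact is_lim_exp_m].
  apply (filterlim_comp _ _ _ ln (Rmult (- q)) _ (Rbar_locally p_infty)); [exact is_lim_ln_p|].
  rewrite <- (is_Rbar_mult_unique (- q) p_infty m_infty).
  - apply filterlim_Rbar_mult_l.
  - apply is_Rbar_mult_sym, is_Rbar_mult_p_infty_neg; simpl; lra.
Qed.

Lemma filterlim_div_0 {T} (F : (T -> Prop) -> Prop) (f : T -> R) c :
  filterlim f F (locally 0) -> filterlim (fun x => f x / c) F (locally 0).
Proof.
  intros Hf. apply (filterlim_comp _ _ _ f (fun y => y * / c) _ (locally 0)); [exact Hf|].
  generalize (filterlim_Rbar_mult_r (/ c) 0). simpl. rewrite Rmult_0_l. exact (fun H => H).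
Qed.

Lemma ex_filterlim_of_increment_bound (F : (R -> Prop) -> Prop) {FF : ProperFilter F}
  (phi B : R -> R) (D : R -> Prop) :
  F D -> filterlim B F (locally 0) ->
  (forall u v, D u -> D v -> u <= v -> 0 <= phi v - phi u <= Rmax (B u) (B v)) ->
  exists L, filterlim phi F (locally L).
Proof.
  intros HD HB Hinc. apply (proj1 (filterlim_locally_cauchy (F := F) phi)). intros eps.
  exists (fun x => D x /\ Rabs (B x) < eps). split.
  - apply filter_and; [exact HD|].
    apply (filter_imp (fun x => ball 0 eps (B x))); [|exact (HB _ (locally_ball 0 eps))].
    intros x Hx. rewrite ball_Rabs, Rminus_0_r in Hx. exact Hx.
  - assert (Hle : forall u v, D u /\ Rabs (B u) < eps -> D v /\ Rabs (B v) < eps -> u <= v ->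
              ball (phi u) eps (phi v)).
    { intros u v [Du Bu] [Dv Bv] Huv. rewrite ball_Rabs.
      destruct (Hinc u v Du Dv Huv) as [H0 H1]. rewrite Rabs_pos_eq by exact H0.
      apply (Rle_lt_trans _ _ _ H1), Rmax_lub_lt;
        eapply Rle_lt_trans; try apply Rle_abs; assumption. }
    intros u v Hu Hv. destruct (Rle_lt_dec u v).
    + apply Hle; assumption.
    + apply ball_sym, Hle; [assumption | assumption | lra].
Qed.

Section ContinuousOnPositiveReals.

Variable f : R -> R.
Hypothesis f_cont : forall t, 0 < t -> continuous f t.

Lemma ex_RInt_pos a b : 0 < a -> 0 < b -> ex_RInt f a b.
Proof.
  intros Ha Hb. apply (@ex_RInt_continuous R_CompleteNormedModule).
  intros x Hx. apply f_cont, (segment_pos a b); assumption.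
Qed.

Lemma RInt_sub_RInt_1 u v : 0 < u -> 0 < v -> RInt f 1 v - RInt f 1 u = RInt f u v.
Proof.
  intros Hu Hv. rewrite <- (RInt_Chasles f 1 u v) by (apply ex_RInt_pos; lra).
  unfold plus; simpl; ring.
Qed.

Lemma RInt_le_Rpower p u v : p <> 0 -> 0 < u -> u <= v ->
  (forall t, 0 < t -> f t <= Rpower t (p - 1)) ->
  RInt f u v <= (Rpower v p - Rpower u p) / p.
Proof.
  intros Hp Hu Huv Hf. rewrite <- RInt_Rpower by lra.
  apply RInt_le; [assumption | apply ex_RInt_pos; lra | |].
  - apply (@ex_RInt_continuous R_CompleteNormedModule).
    intros x Hx. apply continuous_Rpower_l, (segment_pos u v); lra.
  - intros x Hx. apply Hf. lra.
Qed.

Lemma is_derive_RInt_1 x : 0 < x -> is_derive (RInt f 1) x (f x).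
Proof.
  intros Hx. apply (is_derive_RInt (V := R_NormedModule) f (RInt f 1) 1 x).
  - apply (filter_imp (fun y => 0 < y)); [|exact (open_gt 0 x Hx)].
    intros y Hy. apply (RInt_correct (V := R_CompleteNormedModule)), ex_RInt_pos; lra.
  - apply f_cont, Hx.
Qed.

Lemma continuous_Derive_RInt_1 x : 0 < x -> continuous (Derive (RInt f 1)) x.
Proof.
  intros Hx. apply (continuous_ext_loc _ f); [|apply f_cont, Hx].
  apply (filter_imp (fun y => 0 < y)); [|exact (open_gt 0 x Hx)].
  intros y Hy. symmetry. apply is_derive_unique, is_derive_RInt_1, Hy.
Qed.

Lemma is_RInt_gen_at_right_0 (Fb : (R -> Prop) -> Prop) {FFb : Filter Fb} L0 Lb :
  filterlim (RInt f 1) (at_right 0) (locally L0) ->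
  filterlim (RInt f 1) Fb (locally Lb) -> Fb (fun b => 0 < b) ->
  is_RInt_gen f (at_right 0) Fb (Lb - L0).
Proof.
  intros H0 H1 Fb_pos.
  assert (Hseg : filter_prod (at_right 0) Fb
     (fun ab => forall x, Rmin (fst ab) (snd ab) <= x <= Rmax (fst ab) (snd ab) -> 0 < x)).
  { apply (Filter_prod _ _ _ _ _ at_right_0_pos Fb_pos).
    intros a b Ha Hb x Hx. apply (segment_pos a b); assumption. }
  apply (is_RInt_gen_ext (Derive (RInt f 1))).
  - eapply filter_imp; [|exact Hseg]. intros ab H x Hx.
    apply is_derive_unique, is_derive_RInt_1, H. lra.
  - apply is_RInt_gen_Derive; [| | exact H0 | exact H1];
      eapply filter_imp; try exact Hseg; intros ab H x Hx.
    + exists (f x). apply is_derive_RInt_1, H, Hx.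
    + apply continuous_Derive_RInt_1, H, Hx.
Qed.

Lemma RInt_dilation th a b : 0 < th -> 0 < a -> 0 < b ->
  RInt f (th * a) (th * b) = RInt (fun t => th * f (th * t)) a b.
Proof.
  intros Hth Ha Hb.
  rewrite <- (Rplus_0_r (th * a)), <- (Rplus_0_r (th * b)).
  rewrite <- (RInt_comp_lin (V := R_CompleteNormedModule)) by (apply ex_RInt_pos; nra).
  apply RInt_ext. intros x _. rewrite Rplus_0_r. reflexivity.
Qed.

Lemma continuous_dilation th t : 0 < th -> 0 < t -> continuous (fun t => th * f (th * t)) t.
Proof.
  intros Hth Ht.
  apply (continuous_mult (fun _ => th) (fun t => f (th * t))); [apply continuous_const|].
  apply (continuous_comp (fun t => th * t) f); [|apply f_cont; nra].
  apply (continuous_mult (fun _ => th) (fun t => t)); [apply continuous_const | apply continuous_id].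
Qed.

End ContinuousOnPositiveReals.

Lemma exp_le_exp_compat a b : a <= b -> exp a <= exp b.
Proof. intros [H | ->]; [left; apply exp_increasing, H | right; reflexivity]. Qed.

Lemma ratio_kernel_pos k n t : 0 < ratio_kernel k n t.
Proof. apply Rmult_lt_0_compat; apply exp_pos. Qed.

Lemma continuous_ratio_kernel k n t : 0 < t -> continuous (ratio_kernel k n) t.
Proof.
  intros Ht. unfold ratio_kernel.
  apply (continuous_mult (fun x => Rpower x (k / 2 - 1))
                         (fun x => Rpower (1 + x) (- ((k + n) / 2)))).
  - apply continuous_Rpower_l, Ht.
  - apply (continuous_comp (fun x => 1 + x) (fun x => Rpower x (- ((k + n) / 2)))).
    + apply (continuous_plus (fun _ => 1) (fun x => x)); [apply continuous_const | apply continuous_id].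
    + apply continuous_Rpower_l; lra.
Qed.

Lemma ratio_kernel_le_Rpower_0 k n t : 0 <= k + n -> 0 < t ->
  ratio_kernel k n t <= Rpower t (k / 2 - 1).
Proof.
  intros Hkn Ht. unfold ratio_kernel.
  rewrite <- (Rmult_1_r (Rpower t (k / 2 - 1))) at 2.
  apply Rmult_le_compat_l; [left; apply exp_pos|].
  apply (Rle_trans _ (exp 0)); [apply exp_le_exp_compat | rewrite exp_0; lra].
  assert (0 <= ln (1 + t)) by (rewrite <- ln_1; apply ln_le; lra). nra.
Qed.

Lemma ratio_kernel_le_Rpower_infty k n t : 0 <= k + n -> 0 < t ->
  ratio_kernel k n t <= Rpower t (- (n / 2) - 1).
Proof.
  intros Hkn Ht. unfold ratio_kernel.
  replace (- (n / 2) - 1) with ((k / 2 - 1) + - ((k + n) / 2)) by field.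
  rewrite Rpower_plus. apply Rmult_le_compat_l; [left; apply exp_pos|].
  apply exp_le_exp_compat.
  assert (ln t <= ln (1 + t)) by (apply ln_le; lra). nra.
Qed.

Lemma RInt_ratio_kernel_ge_0 k n u v : 0 < u -> u <= v -> 0 <= RInt (ratio_kernel k n) u v.
Proof.
  intros Hu Huv. apply RInt_ge_0; [exact Huv | |].
  - apply ex_RInt_pos; [exact (continuous_ratio_kernel k n) | lra | lra].
  - intros x _. left; apply ratio_kernel_pos.
Qed.

Lemma ex_lim_RInt_ratio_kernel_0 k n : 0 < k -> 0 <= k + n ->
  exists L, filterlim (RInt (ratio_kernel k n) 1) (at_right 0) (locally L).
Proof.
  intros Hk Hkn. set (p := k / 2).
  apply (ex_filterlim_of_increment_bound _ _ (fun x => Rpower x p / p) (fun x => 0 < x)).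
  - exact at_right_0_pos.
  - apply filterlim_div_0, filterlim_Rpower_0. unfold p; lra.
  - intros u v Hu Hv Huv.
    rewrite RInt_sub_RInt_1 by (exact (continuous_ratio_kernel k n) || assumption).
    split; [apply RInt_ratio_kernel_ge_0; assumption|].
    eapply Rle_trans.
    + apply (RInt_le_Rpower _ (continuous_ratio_kernel k n) p);
        [unfold p; lra | assumption | assumption |].
      intros t Ht. apply ratio_kernel_le_Rpower_0; lra.
    + apply (Rle_trans _ (Rpower v p / p)); [|apply Rmax_r].
      assert (0 < Rpower u p) by apply exp_pos.
      unfold Rdiv. apply Rmult_le_compat_r; [left; apply Rinv_0_lt_compat; unfold p |]; lra.
Qed.

Lemma ex_lim_RInt_ratio_kernel_p_infty k n : 0 < n -> 0 <= k + n ->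
  exists L, filterlim (RInt (ratio_kernel k n) 1) (Rbar_locally p_infty) (locally L).
Proof.
  intros Hn Hkn. set (q := n / 2).
  apply (ex_filterlim_of_increment_bound _ _ (fun x => Rpower x (- q) / q) (fun x => 0 < x)).
  - exists 0. intros x Hx; exact Hx.
  - apply filterlim_div_0, filterlim_Rpower_p_infty. unfold q; lra.
  - intros u v Hu Hv Huv.
    rewrite RInt_sub_RInt_1 by (exact (continuous_ratio_kernel k n) || assumption).
    split; [apply RInt_ratio_kernel_ge_0; assumption|].
    eapply Rle_trans.
    + apply (RInt_le_Rpower _ (continuous_ratio_kernel k n) (- q));
        [unfold q; lra | assumption | assumption |].
      intros t Ht. apply ratio_kernel_le_Rpower_infty; lra.
    + apply (Rle_trans _ (Rpower u (- q) / q)); [|apply Rmax_l].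
      assert (0 < Rpower v (- q)) by apply exp_pos.
      replace ((Rpower v (- q) - Rpower u (- q)) / - q) with ((Rpower u (- q) - Rpower v (- q)) / q)
        by (field; unfold q; lra).
      unfold Rdiv. apply Rmult_le_compat_r; [left; apply Rinv_0_lt_compat; unfold q |]; lra.
Qed.

Lemma RInt_gen_ratio_kernel_at_point k n L0 x :
  filterlim (RInt (ratio_kernel k n) 1) (at_right 0) (locally L0) -> 0 < x ->
  RInt_gen (ratio_kernel k n) (at_right 0) (at_point x) = RInt (ratio_kernel k n) 1 x - L0.
Proof.
  intros H0 Hx.
  apply (is_RInt_gen_unique (V := R_CompleteNormedModule) (Fa := at_right 0)
           (FFb := Proper_StrongProper _ (at_point_filter x))).
  apply (is_RInt_gen_at_right_0 _ (continuous_ratio_kernel k n) (at_point x));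
    [exact H0 | | exact Hx].
  intros P HP. exact (locally_singleton _ _ HP).
Qed.

Lemma ratio_norm_eq k n L0 L1 :
  filterlim (RInt (ratio_kernel k n) 1) (at_right 0) (locally L0) ->
  filterlim (RInt (ratio_kernel k n) 1) (Rbar_locally p_infty) (locally L1) ->
  ratio_norm k n = L1 - L0.
Proof.
  intros H0 H1. unfold ratio_norm.
  apply (is_RInt_gen_unique (V := R_CompleteNormedModule) (Fa := at_right 0)
           (Fb := Rbar_locally p_infty)).
  apply (is_RInt_gen_at_right_0 _ (continuous_ratio_kernel k n) (Rbar_locally p_infty));
    [exact H0 | exact H1 |].
  exists 0. intros x Hx; exact Hx.
Qed.

Lemma ratio_norm_pos k n : 0 < k -> 0 < n -> 0 < ratio_norm k n.
Proof.
  intros Hk Hn.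
  destruct (ex_lim_RInt_ratio_kernel_0 k n Hk ltac:(lra)) as [L0 H0].
  destruct (ex_lim_RInt_ratio_kernel_p_infty k n Hn ltac:(lra)) as [L1 H1].
  rewrite (ratio_norm_eq k n L0 L1 H0 H1).
  set (Phi := RInt (ratio_kernel k n) 1) in *.
  assert (Phi_le : forall u v, 0 < u -> u <= v -> Phi u <= Phi v).
  { intros u v Hu Huv. assert (H := RInt_ratio_kernel_ge_0 k n u v Hu Huv).
    rewrite <- (RInt_sub_RInt_1 _ (continuous_ratio_kernel k n)) in H; unfold Phi; lra. }
  assert (L0_le : L0 <= Phi (1 / 2)).
  { apply (filterlim_le (F := at_right 0) Phi (fun _ => Phi (1 / 2)) L0 (Phi (1 / 2)));
      [|exact H0 | apply filterlim_const].
    exists (mkposreal (1 / 2) ltac:(lra)). intros y Hy Hy0.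
    rewrite ball_Rabs, Rminus_0_r, Rabs_pos_eq in Hy by lra. apply Phi_le; simpl in *; lra. }
  assert (L1_ge : Phi 1 <= L1).
  { apply (filterlim_le (F := Rbar_locally p_infty) (fun _ => Phi 1) Phi (Phi 1) L1);
      [|apply filterlim_const | exact H1].
    exists 1. intros y Hy. apply Phi_le; lra. }
  assert (Phi_lt : Phi (1 / 2) < Phi 1).
  { assert (H := RInt_gt_0 (ratio_kernel k n) (1 / 2) 1 ltac:(lra)
      (fun x _ => ratio_kernel_pos k n x) (fun x Hx => continuous_ratio_kernel k n x ltac:(lra))).
    rewrite <- (RInt_sub_RInt_1 _ (continuous_ratio_kernel k n)) in H by lra. unfold Phi; lra. }
  lra.
Qed.

Definition ratio_density (k n t : R) : R := ratio_kernel k n t / ratio_norm k n.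

Lemma continuous_ratio_density k n t : 0 < t -> continuous (ratio_density k n) t.
Proof.
  intros Ht. apply (continuous_mult (ratio_kernel k n) (fun _ => / ratio_norm k n)).
  - apply continuous_ratio_kernel, Ht.
  - apply continuous_const.
Qed.

Lemma Psibar_sub k n x y : 0 < k -> 0 < n -> 0 < x -> 0 < y ->
  Psibar k n x - Psibar k n y = RInt (ratio_density k n) x y.
Proof.
  intros Hk Hn Hx Hy.
  destruct (ex_lim_RInt_ratio_kernel_0 k n Hk ltac:(lra)) as [L0 H0].
  assert (HN := ratio_norm_pos k n Hk Hn).
  unfold Psibar, Psi.
  rewrite (RInt_gen_ratio_kernel_at_point k n L0 x H0 Hx),
          (RInt_gen_ratio_kernel_at_point k n L0 y H0 Hy).
  transitivity (/ ratio_norm k n * RInt (ratio_kernel k n) x y).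
  - rewrite <- (RInt_sub_RInt_1 _ (continuous_ratio_kernel k n) x y Hx Hy). field. lra.
  - rewrite <- (RInt_scal (V := R_CompleteNormedModule))
      by (apply ex_RInt_pos; [exact (continuous_ratio_kernel k n) | assumption | assumption]).
    apply RInt_ext. intros t _. unfold ratio_density, scal; simpl; unfold mult; simpl. field. lra.
Qed.

Lemma Psibar_dilation_sub k n th x y : 0 < k -> 0 < n -> 0 < th -> 0 < x -> 0 < y ->
  Psibar k n (th * x) - Psibar k n (th * y) = RInt (fun t => th * ratio_density k n (th * t)) x y.
Proof.
  intros Hk Hn Hth Hx Hy. rewrite Psibar_sub by nra.
  apply (RInt_dilation _ (continuous_ratio_density k n)); assumption.
Qed.

Lemma ratio_kernel_dilation_ratio k h n th t : 0 < th -> 0 < t ->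
  ratio_kernel (k + h) n (th * t) / ratio_kernel k n t =
  Rpower th ((k + h) / 2 - 1) * Rpower (t / (1 + th * t)) (h / 2)
    * Rpower ((1 + t) / (1 + th * t)) ((k + n) / 2).
Proof.
  intros Hth Ht. unfold ratio_kernel, Rpower.
  rewrite ln_mult, !ln_div by nra.
  unfold Rdiv at 1. rewrite Rinv_mult, <- !exp_Ropp, <- !exp_plus.
  f_equal. field.
Qed.

Lemma Rdiv_le_Rdiv_cross a b c d : 0 < b -> 0 < d -> a * d <= c * b -> a / b <= c / d.
Proof.
  intros Hb Hd H.
  replace (a / b) with (a * d * / (b * d)) by (field; lra).
  replace (c / d) with (c * b * / (b * d)) by (field; lra).
  apply Rmult_le_compat_r; [left; apply Rinv_0_lt_compat; nra | exact H].
Qed.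

Lemma ratio_kernel_dilation_ratio_le k h n th s t :
  0 <= h -> 0 <= k + n -> 0 < th <= 1 -> 0 < s <= t ->
  ratio_kernel (k + h) n (th * s) / ratio_kernel k n s
    <= ratio_kernel (k + h) n (th * t) / ratio_kernel k n t.
Proof.
  intros Hh Hkn Hth Hst. rewrite !ratio_kernel_dilation_ratio by lra.
  apply Rmult_le_compat; try (left; apply exp_pos).
  - left. apply Rmult_lt_0_compat; apply exp_pos.
  - apply Rmult_le_compat_l; [left; apply exp_pos|].
    apply Rle_Rpower_l; [lra|]. split; [apply Rdiv_lt_0_compat; nra|].
    apply Rdiv_le_Rdiv_cross; nra.
  - apply Rle_Rpower_l; [lra|]. split; [apply Rdiv_lt_0_compat; nra|].
    apply Rdiv_le_Rdiv_cross; nra.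
Qed.

Lemma ratio_kernel_dilation_ratio_ge k n th s t : 0 <= k + n -> 1 <= th -> 0 < s <= t ->
  ratio_kernel k n (th * t) / ratio_kernel k n t <= ratio_kernel k n (th * s) / ratio_kernel k n s.
Proof.
  intros Hkn Hth Hst.
  assert (E : forall x, 0 < x -> ratio_kernel k n (th * x) / ratio_kernel k n x =
            Rpower th (k / 2 - 1) * Rpower ((1 + x) / (1 + th * x)) ((k + n) / 2)).
  { intros x Hx. rewrite <- (Rplus_0_r k) at 1 3.
    rewrite ratio_kernel_dilation_ratio by lra.
    rewrite Rplus_0_r, Rdiv_0_l, Rpower_O, Rmult_1_r.
    - reflexivity.
    - apply Rdiv_lt_0_compat; nra. }
  rewrite !E by lra.
  apply Rmult_le_compat_l; [left; apply exp_pos|].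
  apply Rle_Rpower_l; [lra|]. split; [apply Rdiv_lt_0_compat; nra|].
  apply Rdiv_le_Rdiv_cross; nra.
Qed.

Lemma concave_on_of_slopes a b (g : R -> R) :
  (forall u1 u2 u3, a < u1 -> u1 < u2 -> u2 < u3 -> u3 < b ->
     exists r, r * (u2 - u1) <= g u2 - g u1 /\ g u3 - g u2 <= r * (u3 - u2)) ->
  concave_on a b g.
Proof.
  intros Hslope.
  assert (Hlt : forall x y t, a < x -> x < y -> y < b -> 0 < t < 1 ->
            t * g x + (1 - t) * g y <= g (t * x + (1 - t) * y)).
  { intros x y t Hx Hxy Hy Ht. set (z := t * x + (1 - t) * y).
    destruct (Hslope x z y) as [r [H1 H2]]; [lra | unfold z; nra | unfold z; nra | lra |].
    replace (z - x) with ((1 - t) * (y - x)) in H1 by (unfold z; ring).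
    replace (y - z) with (t * (y - x)) in H2 by (unfold z; ring).
    nra. }
  intros x y t Hx Hy Ht.
  destruct (Req_dec t 0) as [-> | Ht0]; [replace (0 * x + (1 - 0) * y) with y by ring; lra|].
  destruct (Req_dec t 1) as [-> | Ht1]; [replace (1 * x + (1 - 1) * y) with x by ring; lra|].
  destruct (Rtotal_order x y) as [Hxy | [-> | Hxy]].
  - apply Hlt; lra.
  - replace (t * y + (1 - t) * y) with y by ring. lra.
  - replace (t * x + (1 - t) * y) with ((1 - t) * y + (1 - (1 - t)) * x) by ring.
    replace (t * g x + (1 - t) * g y) with ((1 - t) * g y + (1 - (1 - t)) * g x) by ring.
    apply Hlt; lra.
Qed.

Lemma convex_on_of_concave_on_opp a b (g : R -> R) :
  concave_on a b (fun x => - g x) -> convex_on a b g.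
Proof. intros H x y t Hx Hy Ht. specialize (H x y t Hx Hy Ht). simpl in H. lra. Qed.

Section MonotoneLikelihoodRatio.

Variables (w f X G : R -> R).
Hypothesis w_pos : forall t, 0 < t -> 0 < w t.
Hypothesis w_cont : forall t, 0 < t -> continuous w t.
Hypothesis f_cont : forall t, 0 < t -> continuous f t.
Hypothesis X_pos : forall u, 0 < u < 1 -> 0 < X u.
Hypothesis X_mass : forall u v, 0 < u < 1 -> 0 < v < 1 -> u - v = RInt w (X u) (X v).
Hypothesis G_sub : forall u v, 0 < u < 1 -> 0 < v < 1 -> G u - G v = RInt f (X u) (X v).
Hypothesis ratio_le : forall s t, 0 < s -> s <= t -> f s / w s <= f t / w t.

Lemma survival_inverse_decreasing u v : 0 < u -> u < v -> v < 1 -> X v < X u.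
Proof.
  intros Hu Huv Hv. destruct (Rlt_or_le (X v) (X u)) as [Hlt | Hle]; [exact Hlt|].
  assert (H := X_mass u v ltac:(lra) ltac:(lra)).
  assert (0 <= RInt w (X u) (X v)); [|lra].
  apply RInt_ge_0; [exact Hle | |].
  - apply ex_RInt_pos; [exact w_cont | apply X_pos; lra | apply X_pos; lra].
  - intros t Ht. left. apply w_pos. assert (0 < X u) by (apply X_pos; lra). lra.
Qed.

Lemma RInt_scal_le_of_ratio_ge r a b : 0 < a -> a <= b ->
  (forall t, a <= t <= b -> r <= f t / w t) -> r * RInt w a b <= RInt f a b.
Proof.
  intros Ha Hab Hr.
  rewrite <- (RInt_scal (V := R_CompleteNormedModule))
    by (apply ex_RInt_pos; [exact w_cont | lra | lra]).
  apply RInt_le; [exact Hab | | apply ex_RInt_pos; [exact f_cont | lra | lra] |].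
  - apply (ex_RInt_scal (V := R_CompleteNormedModule)), ex_RInt_pos; [exact w_cont | lra | lra].
  - intros t Ht. apply Rle_div_r; [apply w_pos; lra | apply Hr; lra].
Qed.

Lemma RInt_le_scal_of_ratio_le r a b : 0 < a -> a <= b ->
  (forall t, a <= t <= b -> f t / w t <= r) -> RInt f a b <= r * RInt w a b.
Proof.
  intros Ha Hab Hr.
  rewrite <- (RInt_scal (V := R_CompleteNormedModule))
    by (apply ex_RInt_pos; [exact w_cont | lra | lra]).
  apply RInt_le; [exact Hab | apply ex_RInt_pos; [exact f_cont | lra | lra] | |].
  - apply (ex_RInt_scal (V := R_CompleteNormedModule)), ex_RInt_pos; [exact w_cont | lra | lra].
  - intros t Ht. apply Rle_div_l; [apply w_pos; lra | apply Hr; lra].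
Qed.

Lemma concave_on_of_ratio_le : concave_on 0 1 G.
Proof.
  apply concave_on_of_slopes. intros u1 u2 u3 H1 H12 H23 H3.
  assert (X12 := survival_inverse_decreasing u1 u2 H1 H12 ltac:(lra)).
  assert (X23 := survival_inverse_decreasing u2 u3 ltac:(lra) H23 H3).
  assert (X3 := X_pos u3 ltac:(lra)).
  exists (f (X u2) / w (X u2)).
  rewrite (X_mass u2 u1), (X_mass u3 u2), (G_sub u2 u1), (G_sub u3 u2) by lra. split.
  - apply RInt_scal_le_of_ratio_ge; [lra | lra |]. intros t Ht. apply ratio_le; lra.
  - apply RInt_le_scal_of_ratio_le; [lra | lra |]. intros t Ht. apply ratio_le; lra.
Qed.

End MonotoneLikelihoodRatio.

Lemma convex_on_of_ratio_ge (w f X G : R -> R) :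
  (forall t, 0 < t -> 0 < w t) ->
  (forall t, 0 < t -> continuous w t) ->
  (forall t, 0 < t -> continuous f t) ->
  (forall u, 0 < u < 1 -> 0 < X u) ->
  (forall u v, 0 < u < 1 -> 0 < v < 1 -> u - v = RInt w (X u) (X v)) ->
  (forall u v, 0 < u < 1 -> 0 < v < 1 -> G u - G v = RInt f (X u) (X v)) ->
  (forall s t, 0 < s -> s <= t -> f t / w t <= f s / w s) ->
  convex_on 0 1 G.
Proof.
  intros w_pos w_cont f_cont X_pos X_mass G_sub ratio_ge.
  apply convex_on_of_concave_on_opp, (concave_on_of_ratio_le w (fun t => - f t) X);
    [assumption | assumption | | assumption | assumption | |].
  - intros t Ht. exact (continuous_opp (V := R_NormedModule) f t (f_cont t Ht)).
  - intros u v Hu Hv. rewrite (RInt_opp (V := R_CompleteNormedModule)).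
    + rewrite <- G_sub by assumption. unfold opp; simpl. ring.
    + apply ex_RInt_pos; [exact f_cont | apply X_pos, Hu | apply X_pos, Hv].
  - intros s t Hs Hst. rewrite !Rdiv_opp_l. apply Ropp_le_contravar, ratio_ge; assumption.
Qed.

Lemma ratio_density_pos k n t : 0 < k -> 0 < n -> 0 < ratio_density k n t.
Proof.
  intros Hk Hn. apply Rdiv_lt_0_compat; [apply ratio_kernel_pos | apply ratio_norm_pos; assumption].
Qed.

Lemma ratio_density_dilation_ratio k h n th t : 0 < k -> 0 < k + h -> 0 < n -> 0 < th -> 0 < t ->
  th * ratio_density (k + h) n (th * t) / ratio_density k n t =
  th * (ratio_norm k n / ratio_norm (k + h) n)
     * (ratio_kernel (k + h) n (th * t) / ratio_kernel k n t).
Proof.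
  intros Hk Hkh Hn Hth Ht. unfold ratio_density.
  assert (ratio_norm k n > 0) by (apply ratio_norm_pos; assumption).
  assert (ratio_norm (k + h) n > 0) by (apply ratio_norm_pos; assumption).
  assert (ratio_kernel k n t > 0) by apply ratio_kernel_pos.
  field. lra.
Qed.

Lemma ratio_density_dilation_ratio_le k h n th s t :
  0 < k -> 0 <= h -> 0 < n -> 0 < th <= 1 -> 0 < s <= t ->
  th * ratio_density (k + h) n (th * s) / ratio_density k n s
    <= th * ratio_density (k + h) n (th * t) / ratio_density k n t.
Proof.
  intros Hk Hh Hn Hth Hst. rewrite !ratio_density_dilation_ratio by lra.
  apply Rmult_le_compat_l.
  - left. apply Rmult_lt_0_compat; [lra | apply Rdiv_lt_0_compat; apply ratio_norm_pos; lra].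
  - apply ratio_kernel_dilation_ratio_le; lra.
Qed.

Lemma ratio_density_dilation_ratio_ge k n th s t : 0 < k -> 0 < n -> 1 <= th -> 0 < s <= t ->
  th * ratio_density k n (th * t) / ratio_density k n t
    <= th * ratio_density k n (th * s) / ratio_density k n s.
Proof.
  intros Hk Hn Hth Hst.
  rewrite <- (Rplus_0_r k) at 1 3. rewrite !ratio_density_dilation_ratio, !Rplus_0_r by lra.
  apply Rmult_le_compat_l.
  - left. apply Rmult_lt_0_compat; [lra | apply Rdiv_lt_0_compat; apply ratio_norm_pos; lra].
  - apply ratio_kernel_dilation_ratio_ge; lra.
Qed.

Theorem mainTheorem7 (m n h theta : R) (Psibar_inv : R -> R) :
  0 < m -> 0 < n -> 0 <= h -> 0 < theta ->
  (forall u, 0 < u < 1 -> 0 < Psibar_inv u /\ Psibar m n (Psibar_inv u) = u) ->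
  let g := fun u => Psibar (m + h) n (theta * Psibar_inv u) in
  (theta <= 1 -> concave_on 0 1 g) /\
  (1 < theta -> h = 0 -> convex_on 0 1 g).
Proof.
  intros Hm Hn Hh Hth HX g.
  set (w := ratio_density m n).
  set (f := fun t => theta * ratio_density (m + h) n (theta * t)).
  assert (X_pos : forall u, 0 < u < 1 -> 0 < Psibar_inv u) by (intros u Hu; apply HX, Hu).
  assert (X_mass : forall u v, 0 < u < 1 -> 0 < v < 1 ->
                    u - v = RInt w (Psibar_inv u) (Psibar_inv v)).
  { intros u v Hu Hv. rewrite <- (proj2 (HX u Hu)) at 1. rewrite <- (proj2 (HX v Hv)) at 1.
    apply Psibar_sub; auto. }
  assert (g_sub : forall u v, 0 < u < 1 -> 0 < v < 1 ->
                   g u - g v = RInt f (Psibar_inv u) (Psibar_inv v)).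
  { intros u v Hu Hv. apply Psibar_dilation_sub; auto; lra. }
  assert (w_pos : forall t, 0 < t -> 0 < w t) by (intros t _; apply ratio_density_pos; assumption).
  assert (w_cont : forall t, 0 < t -> continuous w t) by exact (continuous_ratio_density m n).
  assert (f_cont : forall t, 0 < t -> continuous f t)
    by (intros t Ht; apply (continuous_dilation _ (continuous_ratio_density (m + h) n)); assumption).
  split.
  - intros Hth1. apply (concave_on_of_ratio_le w f Psibar_inv); try assumption.
    intros s t Hs Hst. apply ratio_density_dilation_ratio_le; lra.
  - intros Hth1 Hh0. apply (convex_on_of_ratio_ge w f Psibar_inv); try assumption.
    intros s t Hs Hst. unfold f, w. subst h. rewrite Rplus_0_r.
    apply ratio_density_dilation_ratio_ge; lra.
Qed.
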